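(* Let $G$ be a connected chordal graph with at least two vertices. A vertex $v\in V(G)$ is an $\mathcal{F}$-branch leaf of some perfect elimination ordering of $G$ if and only if the induced subgraph $G[N_G(v)]$ has a dominating clique.
   Context: Graphs are finite, simple, undirected; $N_G(v)$ is the open neighborhood of $v$. A graph is chordal if it has no induced cycle of length at least 4. A clique $C$ of a graph $H$ is dominating if every vertex of $H$ is in $C$ or has a neighbor in $C$. A vertex ordering $\sigma$ of $G$ (a bijection $\{1,\dots,n\}\to V(G)$, with $u\prec_\sigma w$ meaning $u$ comes before $w$) is a perfect elimination ordering (PEO) if for every vertex $v$ the neighbors of $v$ that precede $v$ in $\sigma$ form a clique. For an ordering $\sigma$ of a connected graph in which every vertex other than $\sigma(1)$ has a neighbor to its left (as is the case for PEOs of connected chordal graphs), the $\mathcal{F}$-tree of $\sigma$ is the spanning tree containing, for each $v\neq\sigma(1)$, the edge from $v$ to its leftmost neighbor in $\sigma$. A vertex $v\neq\sigma(1)$ that is a leaf of the $\mathcal{F}$-tree is an $\mathcal{F}$-branch leaf of $\sigma$. *)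

From mathcomp Require Import all_boot.
Set Implicit Arguments. Unset Strict Implicit. Unset Printing Implicit Defensive.

Section Graphs.
Variables (T : finType) (e : rel T).

Definition simple_graph := symmetric e /\ irreflexive e.

Definition connected_graph := forall x y : T, connect e x y.

(* induced cycle of length k >= 4: an injective cyclic labelling f : 'I_k -> T
   such that f i, f j are adjacent exactly when i, j are cyclically consecutive *)
Definition induced_cycle (k : nat) (f : 'I_k -> T) :=
  4 <= k /\ injective f /\
  forall i j : 'I_k, e (f i) (f j) = ((i.+1 %% k == j) || (j.+1 %% k == i)).

Definition chordal := forall (k : nat) (f : 'I_k -> T), ~ induced_cycle f.

Definition nbhd (v : T) : {set T} := [set u | e v u].

Definition is_clique (C : {set T}) :=
  forall x y, x \in C -> y \in C -> x != y -> e x y.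

Definition dominating_clique_of (S C : {set T}) :=
  C \subset S /\ is_clique C /\
  forall x, x \in S -> x \in C \/ exists2 y, y \in C & e x y.

(* A vertex ordering is a duplicate-free sequence listing every vertex;
   u precedes w iff index u s < index w s; sigma(1) is the element of index 0. *)
Definition vertex_ordering (s : seq T) := uniq s /\ forall x, x \in s.

Definition prec (s : seq T) (u w : T) := index u s < index w s.

Definition PEO (s : seq T) :=
  vertex_ordering s /\
  forall v u w, e u v -> e w v -> prec s u v -> prec s w v -> u != w -> e u w.

Definition leftmost_nbr (s : seq T) (u w : T) :=
  e u w /\ forall x, e u x -> index w s <= index x s.

Definition Ftree_edge (s : seq T) (u w : T) :=
  (index u s != 0 /\ leftmost_nbr s u w) \/ (index w s != 0 /\ leftmost_nbr s w u).

Definition Fbranch_leaf (s : seq T) (v : T) :=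
  index v s != 0 /\
  exists w, Ftree_edge s v w /\ forall w', Ftree_edge s v w' -> w' = w.

End Graphs.

From mathcomp Require Import all_boot zify.
Set Implicit Arguments. Unset Strict Implicit. Unset Printing Implicit Defensive.

(* In a PEO the earlier neighbours L of v form a clique, and a later neighbour of v
   with no neighbour before v has v as its leftmost neighbour, i.e. it is joined to v
   in the F-tree. So if v is an F-branch leaf, L dominates N(v) (or, when L is empty,
   N(v) consists of the unique F-tree neighbour of v).
   Conversely, list a dominating clique C of N(v), then v, and complete the list to a
   PEO by repeatedly appending a vertex that is simplicial in the remaining graph and
   lies outside the initial clique. Such a vertex exists in every chordal graph: take z
   adjacent to the whole clique; if some vertex is far from z, recurse into a component
   of the vertices far from z together with its boundary, which is a clique because a
   chordless path through the component between two nonadjacent boundary vertices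
   would close an induced cycle through z. In this PEO the leftmost neighbour of v is
   in C, and every later neighbour of v has a neighbour in C, hence before v, so v has
   no other F-tree neighbour. *)

Lemma size_cat_take_drop (A : Type) a b (q : seq A) : a <= b <= size q ->
  size (take a q ++ drop b q) = a + (size q - b).
Proof. by move=> abq; rewrite size_cat size_takel ?size_drop //; lia. Qed.

Lemma nth_cat_take_drop (A : Type) (x0 : A) a b (q : seq A) k : a <= b <= size q ->
  nth x0 (take a q ++ drop b q) k = nth x0 q (if k < a then k else k - a + b).
Proof.
move=> abq; rewrite nth_cat size_takel; last by lia.
by case: ifP => ka; rewrite ?nth_take ?nth_drop //; congr nth; lia.
Qed.

Lemma path_target_all (A : Type) (r : rel A) (P : pred A) x p :
  (forall a b, r a b -> P b) -> path r x p -> all P p.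
Proof. by move=> rP; elim: p x => //= y p IH x /andP[/rP -> /IH]. Qed.

Lemma modS_ord (i n : nat) : i < n.+1 -> i.+1 %% n.+1 = if i == n then 0 else i.+1.
Proof. by move=> lt_in; case: eqP => [->|neq_in]; rewrite ?modnn // modn_small //; lia. Qed.

(** * Induced cycles from chordless paths *)

Section ChordalGraphs.
Variables (T : finType) (e : rel T).
Hypotheses (esym : symmetric e) (eirr : irreflexive e).

Definition chordless x0 (q : seq T) :=
  forall i j, i < j < size q -> e (nth x0 q i) (nth x0 q j) = (j == i.+1).

Lemma chordless_uniq (x0 : T) (q : seq T) :
  nth x0 q 0 != nth x0 q (size q).-1 -> chordless x0 q -> uniq q.
Proof.
move=> ends_neq cl; apply/(uniqP x0) => s t; rewrite !inE => ltsq lttq eq_st.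
set m := size q in ltsq lttq ends_neq *.
apply/eqP/negPn/negP => neq_st.
wlog lt_st : s t ltsq lttq eq_st neq_st / s < t.
  move=> W; case: (ltngtP s t) => [|lt_ts|eq_st']; [exact: W| |by rewrite eq_st' eqxx in neq_st].
  by apply: (W t s) => //; rewrite eq_sym.
case: s => [|s] in ltsq eq_st neq_st lt_st *.
  have [lt_tq|eq_tq] := ltnP t.+1 m.
    by have := cl 0 t.+1; rewrite eq_st cl; lia.
  by move: ends_neq; rewrite eq_st (_ : t = m.-1) ?eqxx //; lia.
by have := cl s t; rewrite -eq_st cl; lia.
Qed.

Lemma apex_chordless_induced_cycle (z : T) (q : seq T) : 3 <= size q -> z \notin q ->
  nth z q 0 != nth z q (size q).-1 -> chordless z q ->
  (forall i, i < size q -> e z (nth z q i) = (i == 0) || (i == (size q).-1)) ->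
  induced_cycle e (fun i : 'I_(size q).+1 => nth z (z :: q) i).
Proof.
move=> size_q zq ends_neq cl zq_ends; split; first by [].
split.
  move=> i j /eqP; rewrite nth_uniq ?ltn_ord /= ?zq ?(chordless_uniq ends_neq cl) //.
  by move/eqP/val_inj.
have qq_adj s t : s < size q -> t < size q ->
    e (nth z q s) (nth z q t) = (t == s.+1) || (s == t.+1).
  move=> ltsq lttq; case: (ltngtP s t) => [lt_st|lt_ts|->].
  - by rewrite cl; lia.
  - by rewrite esym cl; lia.
  - by rewrite eirr; lia.
case=> [[|s] lt_s]; case=> [[|t] lt_t] /=; rewrite !modS_ord //.
- by rewrite eirr; case: ifPn => /eqP; lia.
- by rewrite zq_ends; [case: ifPn => /eqP; case: ifPn => /eqP|]; lia.
- by rewrite esym zq_ends; [case: ifPn => /eqP; case: ifPn => /eqP|]; lia.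
- by rewrite qq_adj; [case: ifPn => /eqP; case: ifPn => /eqP| |]; lia.
Qed.

Definition detour (z : T) (q : seq T) := [/\ 3 <= size q,
  forall i, i.+1 < size q -> e (nth z q i) (nth z q i.+1),
  e z (nth z q 0) && e z (nth z q (size q).-1),
  (nth z q 0 != nth z q (size q).-1) && ~~ e (nth z q 0) (nth z q (size q).-1) &
  forall i, 0 < i < (size q).-1 -> (nth z q i != z) && ~~ e z (nth z q i)].

Lemma detour_shortcut (z : T) (q : seq T) a b : detour z q -> 0 < a <= b -> b < size q ->
  e (nth z q a.-1) (nth z q b) -> 3 <= a + (size q - b) -> detour z (take a q ++ drop b q).
Proof.
case=> size_q walk z_ends ends inner ab bq chord size_cut.
have abq : a <= b <= size q by lia.
set m := size q in walk z_ends ends inner bq size_cut abq *.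
have last_cut : (a + (m - b)).-1 - a + b = m.-1 by lia.
split; rewrite ?size_cat_take_drop ?nth_cat_take_drop // -/m.
- move=> i lt_i; rewrite !nth_cat_take_drop //.
  case: (ltnP i.+1 a) => [lt_ia|le_ai]; first by rewrite ifT ?walk //; lia.
  case: (ltnP i a) => [lt_ia|le_ia].
    have -> : i = a.-1 by lia.
    by rewrite prednK ?subnn ?add0n //; lia.
  by rewrite (_ : i.+1 - a + b = (i - a + b).+1) ?walk //; lia.
- by rewrite ifT ?ifF ?last_cut //; lia.
- by rewrite ifT ?ifF ?last_cut //; lia.
- by move=> i lt_i; rewrite nth_cat_take_drop //; apply: inner; case: ifP; lia.
Qed.

Hypothesis ech : chordal e.

Lemma chordal_no_detour (z : T) (q : seq T) : ~ detour z q.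
Proof.
have [n] := ubnP (size q); elim: n => // n IH in q *; move=> lt_qn dq.
case: (dq) => size_q walk /andP[z_first z_last] /andP[ends_neq ends_nadj] inner.
set m := size q in lt_qn size_q walk z_last ends_neq ends_nadj inner *.
have [/existsP[[i _] /existsP[[j jm] /andP[/= ij chord]]]|no_chord] :=
  boolP [exists i : 'I_m, exists j : 'I_m, (i.+1 < j) && e (nth z q i) (nth z q j)].
  have [/andP[i0 jm1]|not_ends] := boolP ((i == 0) && (j == m.-1)).
    by move: ends_nadj; rewrite -(eqP i0) -(eqP jm1) chord.
  apply: (IH (take i.+1 q ++ drop j q)); first by rewrite size_cat_take_drop; lia.
  by apply: detour_shortcut; rewrite -/m //; lia.
have cl : chordless z q.
  move=> i j /andP[ij]; case: (eqVneq j i.+1) => [-> jm|ne jm]; first by rewrite walk ?eqxx.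
  apply/negbTE; apply: contra no_chord => chord.
  apply/existsP; exists (Ordinal (ltn_trans ij jm)).
  by apply/existsP; exists (Ordinal jm); rewrite /= chord andbT; lia.
have z_inner i : 0 < i < m.-1 -> ~~ e z (nth z q i) by move/inner/andP=> [].
apply: ech (apex_chordless_induced_cycle size_q _ ends_neq cl _).
  apply/(nthP z) => -[i]; rewrite -/m => lt_im qi_z.
  have [i0|[ilast|iin]] : i = 0 \/ i = m.-1 \/ 0 < i < m.-1 by lia.
  - by move: z_first; rewrite -i0 qi_z eirr.
  - by move: z_last; rewrite -ilast qi_z eirr.
  - by move: (inner i iin); rewrite qi_z eqxx.
move=> i; rewrite -/m => lt_im.
have [->|[->|iin]] : i = 0 \/ i = m.-1 \/ 0 < i < m.-1 by lia.
- by rewrite z_first.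
- by rewrite z_last eqxx orbT.
- by rewrite (negbTE (z_inner i iin)); lia.
Qed.

Lemma chordal_path_outside_nbhd_adj (z u w : T) (p : seq T) : e z u -> e z w -> u != w ->
  path e u (rcons p w) -> all (fun x => (x != z) && ~~ e z x) p -> e u w.
Proof.
move=> zu zw uw walk outside; apply/negPn/negP => not_uw.
case: p walk outside => [|x p] walk outside; first by move: walk; rewrite /= (negbTE not_uw).
set q := u :: rcons (x :: p) w.
have size_q : size q = (size p).+3 by rewrite /q /= size_rcons.
have q_last : nth z q (size q).-1 = w by rewrite size_q /q /= nth_rcons ltnn eqxx.
apply: (@chordal_no_detour z q); split; rewrite ?q_last ?size_q //.
- move=> i lt_i; move/(pathP z): walk; apply; rewrite size_rcons /=; lia.
- by rewrite /= zu zw.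
- by rewrite /= uw.
- case=> [|i] /andP[] // _ lt_ip.
  rewrite (_ : nth z q i.+1 = nth z (rcons (x :: p) w) i) // nth_rcons ifT /=; last by lia.
  by move/(all_nthP z): outside; apply; rewrite /=; lia.
Qed.

(** * Simplicial vertices *)

Definition simplicial (S : {set T}) (x : T) := is_clique e (S :&: nbhd e x).

Definition far_from (S : {set T}) (z : T) := [set a in S | (a != z) && ~~ e z a].

Definition component (R : {set T}) (y : T) :=
  [set c in R | connect [rel a b | [&& e a b, a \in R & b \in R]] y c].

Definition boundary (S C : {set T}) := [set a in S :\: C | [exists c in C, e a c]].

Lemma sub_clique (A B : {set T}) : A \subset B -> is_clique e B -> is_clique e A.
Proof. by move=> /subsetP sAB clB x y /sAB xB /sAB yB; apply: clB. Qed.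

Lemma component_sub R y : component R y \subset R.
Proof. by apply/subsetP => c; rewrite inE => /andP[]. Qed.

Lemma component_closed R y a c : c \in component R y -> a \in R -> e a c -> a \in component R y.
Proof.
rewrite !inE => /andP[cR yc] aR ac; rewrite aR.
by apply: connect_trans yc (connect1 _); rewrite /= esym ac aR cR.
Qed.

Lemma nbhd_sub_component_boundary (S C : {set T}) x : x \in C ->
  S :&: nbhd e x \subset C :|: boundary S C.
Proof.
move=> xC; apply/subsetP => a; rewrite !inE => /andP[aS xa].
case: (boolP (a \in C)) => //= aC; rewrite aS /=.
by apply/existsP; exists x; rewrite xC esym.
Qed.

Lemma boundary_nbr (S C : {set T}) a : a \in boundary S C -> exists2 c, c \in C & e a c.
Proof. by rewrite in_set => /andP[_ /existsP[c /andP[cC ac]]]; exists c. Qed.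

Section FarComponent.
Variables (S : {set T}) (z y : T).
Let C := component (far_from S z) y.

Lemma boundary_far_component_nbhd a : a \in boundary S C -> e z a.
Proof.
rewrite /boundary in_set in_setD => /andP[/andP[aC aS] /existsP[c /andP[cC ac]]].
have zc : ~~ e z c by move: (subsetP (component_sub _ _) c cC); rewrite inE => /and3P[].
apply/negPn/negP => za; case/negP: aC; apply: (component_closed cC _ ac).
by rewrite inE aS za andbT /=; apply: contraNneq zc => <-.
Qed.

Lemma boundary_far_component_clique : is_clique e (boundary S C).
Proof.
move=> a b aB bB ab.
have [ca caC aca] := boundary_nbr aB.
have [cb cbC bcb] := boundary_nbr bB.
set r := [rel a b | [&& e a b, a \in far_from S z & b \in far_from S z]].
have r_sym : connect_sym r by apply: sym_connect_sym => u w /=; rewrite esym (andbC (u \in _)).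
have : connect r ca cb.
  move: caC cbC; rewrite !inE => /andP[_ yca] /andP[_ ycb].
  by apply: connect_trans ycb; rewrite r_sym.
case/connectP => p walk_p cb_last.
have za := boundary_far_component_nbhd aB; have zb := boundary_far_component_nbhd bB.
apply: (chordal_path_outside_nbhd_adj za zb ab (p := ca :: p)).
  rewrite rcons_cons /= aca rcons_path -cb_last esym bcb andbT.
  by apply: sub_path walk_p => u w /andP[].
have far_ca : ca \in far_from S z by exact: (subsetP (component_sub _ _) _ caC).
have allF : all (mem (far_from S z)) (ca :: p).
  by rewrite /= far_ca; apply: path_target_all walk_p => u w /and3P[].
by apply: sub_all allF => u; rewrite /= inE => /andP[].
Qed.

Lemma far_component_boundary_proper : z \in S -> C :|: boundary S C \proper S.
Proof.
move=> zS; apply/properP; split.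
  apply/subsetP => a; rewrite inE => /orP[/(subsetP (component_sub _ _))|]; rewrite !inE.
    by case/and3P.
  by case/andP=> /andP[].
exists z => //; rewrite inE negb_or; apply/andP; split.
  by apply/negP => /(subsetP (component_sub _ _)); rewrite inE eqxx andbF.
by apply/negP => /boundary_far_component_nbhd; rewrite eirr.
Qed.

End FarComponent.

Lemma simplicial_setD1 (S : {set T}) z x : {in S :\ z, forall a, e z a} ->
  simplicial (S :\ z) x -> simplicial S x.
Proof.
move=> z_univ simp u w; rewrite !inE => /andP[uS xu] /andP[wS xw] uw.
case: (eqVneq u z) => [uz|uz]; first by rewrite uz z_univ // !inE wS -uz eq_sym uw.
case: (eqVneq w z) => [wz|wz]; first by rewrite wz esym z_univ // !inE uS uz.
by apply: simp; rewrite // !inE ?uz ?wz ?uS ?wS.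
Qed.

Lemma simplicial_outside_clique (S K : {set T}) : K \subset S -> is_clique e K ->
  ~~ (S \subset K) -> exists2 x, x \in S :\: K & simplicial S x.
Proof.
have [n] := ubnP #|S|; elim: n => // n IH in S K *.
move=> ltSn sKS cliqueK nsSK; have [x0 x0S _] := subsetPn nsSK.
(* The vertices far from z lie outside K. *)
have [z zS zK] : exists2 z, z \in S & {in K, forall k, k = z \/ e z k}.
  case: (set_0Vmem K) => [-> | [k kK]]; first by exists x0 => // k; rewrite inE.
  exists k => [|k' k'K]; first exact: (subsetP sKS).
  by case: (eqVneq k' k) => [->|k'k]; [left | right; apply: cliqueK; rewrite // eq_sym].
case: (set_0Vmem (far_from S z)) => [far0 | [y yfar]].
  have z_univ : {in S :\ z, forall a, e z a}.
    move=> a; rewrite !inE => /andP[az aS]; apply/negPn/negP => za.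
    by move: (in_set0 a); rewrite -far0 !inE aS az za.
  have [SzK | nSzK] := boolP (S :\ z \subset K).
    exists z.
      rewrite inE zS andbT; apply: contra nsSK => zK'.
      by rewrite -(setD1K zS) subUset sub1set zK' SzK.
    apply: sub_clique cliqueK; apply: subset_trans SzK; apply/subsetP => a.
    by rewrite !inE => /andP[aS za]; rewrite aS andbT; apply: contraTneq za => ->; rewrite eirr.
  have ltSzn : #|S :\ z| < n by rewrite (cardsD1 z S) zS in ltSn.
  have nsSzKz : ~~ (S :\ z \subset K :\ z) by rewrite subsetD1 !inE eqxx andbT.
  have [x] := IH _ _ ltSzn (setSD _ sKS) (sub_clique (subD1set K z) cliqueK) nsSzKz.
  rewrite !inE => /and3P[xK xz xS] simp; exists x; first by move: xK; rewrite !inE xz xS andbT.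
  exact: simplicial_setD1 simp.
set C := component (far_from S z) y.
have [|||x] := IH (C :|: boundary S C) (boundary S C) _ (subsetUr _ _).
- have /proper_card := far_component_boundary_proper y zS.
  by move=> lt; apply: leq_trans lt _; rewrite -ltnS.
- exact: boundary_far_component_clique.
- have yC : y \in C by rewrite inE yfar connect0.
  apply/subsetPn; exists y; first by rewrite inE yC.
  by rewrite /boundary in_set in_setD yC.
rewrite inE => /andP[xB]; rewrite inE (negbTE xB) orbF => xC simp.
have := subsetP (component_sub _ _) _ xC; rewrite inE => /and3P[xS xz zx].
exists x.
  by rewrite inE xS andbT; apply/negP => /zK [/eqP|]; [rewrite (negbTE xz) | apply/negP].
by apply: sub_clique simp; rewrite subsetI subsetIr (nbhd_sub_component_boundary S xC).
Qed.

(** * Perfect elimination orderings *)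

Definition perfect_elim (s : seq T) := forall v u w, v \in s -> e u v -> e w v ->
  prec s u v -> prec s w v -> u != w -> e u w.

Lemma prec_mem (s : seq T) u v : v \in s -> prec s u v -> u \in s.
Proof. by rewrite /prec -!index_mem => vs uv; apply: ltn_trans uv vs. Qed.

Lemma prec_rcons (s : seq T) x u v : v \in s -> prec (rcons s x) u v = prec s u v.
Proof.
rewrite /prec -cats1 !index_cat => vs; rewrite vs; case: ifPn => // us.
by rewrite (memNindex us); have := index_size v s; lia.
Qed.

Lemma clique_perfect_elim (k : seq T) : is_clique e [set x in k] -> perfect_elim k.
Proof. by move=> cl v u w vk _ _ uv wv; apply: cl; rewrite inE (prec_mem vk). Qed.

Lemma perfect_elim_rcons (s : seq T) x : perfect_elim s -> x \notin s ->
  simplicial [set y in s] x -> perfect_elim (rcons s x).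
Proof.
move=> pe xs simp v u w; rewrite mem_rcons inE => /orP[/eqP-> | vs] uv wv.
  have prec_last y : prec (rcons s x) y x -> y \in s.
    rewrite /prec -cats1 !index_cat (negbTE xs) index_head addn0.
    by case: ifP => // _; rewrite ltnNge leq_addr.
  by move=> /prec_last us /prec_last ws; apply: simp; rewrite !inE ?us ?ws // esym.
by rewrite !prec_rcons //; apply: pe.
Qed.

Lemma perfect_elim_extend (k : seq T) : uniq k -> is_clique e [set x in k] ->
  forall S : {set T}, [set x in k] \subset S ->
  exists t, [/\ uniq (k ++ t), k ++ t =i S & perfect_elim (k ++ t)].
Proof.
move=> uk clk S; have [n] := ubnP #|S|; elim: n => // n IH in S *; move=> ltSn sKS.
have [sSK|nsSK] := boolP (S \subset [set x in k]).
  exists [::]; rewrite cats0; split; [by [] | | exact: clique_perfect_elim].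
  move=> x; apply/idP/idP => [xk|/(subsetP sSK)]; rewrite ?inE //.
  by apply: (subsetP sKS); rewrite inE.
have [x /setDP[xS xK] simp] := simplicial_outside_clique sKS clk nsSK.
have [||t [ukt kt pe]] := IH (S :\ x).
- by rewrite (cardsD1 x S) xS in ltSn.
- apply/subsetP => y yk; rewrite !inE (subsetP sKS _ yk) andbT.
  by apply: contraNneq xK => <-.
exists (rcons t x); rewrite -rcons_cat.
have xkt : x \notin k ++ t by rewrite kt !inE eqxx.
split.
- by rewrite rcons_uniq xkt.
- by move=> y; rewrite mem_rcons inE kt !inE; case: eqVneq => // ->.
- apply: perfect_elim_rcons => //; apply: sub_clique simp; apply/subsetP => y.
  by rewrite !inE kt !inE => /andP[/andP[_ ->]].
Qed.

Lemma clique_prefix_PEO (k : seq T) : uniq k -> is_clique e [set x in k] ->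
  exists t, PEO e (k ++ t).
Proof.
move=> uk clk; have [t [ukt kt pe]] := perfect_elim_extend uk clk (subsetT _).
exists t; split; first by split => // x; rewrite kt inE.
by move=> v u w; apply: pe; rewrite kt inE.
Qed.

End ChordalGraphs.

(** * F-branch leaves *)

Section FTrees.
Variables (T : finType) (e : rel T).
Hypotheses (esym : symmetric e) (eirr : irreflexive e).

Lemma vertex_ordering_index_inj (s : seq T) : vertex_ordering s -> injective (index^~ s).
Proof. by case=> _ all_s x y; apply: index_inj. Qed.

Lemma leftmost_nbr_exists (s : seq T) v x : e v x -> exists w, leftmost_nbr e s v w.
Proof. by move=> vx; case: (arg_minnP (fun c => index c s) vx) => w vw min; exists w. Qed.

Lemma leftmost_nbr_inj (s : seq T) v w w' : vertex_ordering s ->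
  leftmost_nbr e s v w -> leftmost_nbr e s v w' -> w = w'.
Proof.
move=> vo [vw min] [vw' min']; apply: (vertex_ordering_index_inj vo).
by apply/eqP; rewrite eqn_leq min ?min'.
Qed.

Lemma Fbranch_leaf_nbhd_dominating_clique (s : seq T) v : PEO e s -> Fbranch_leaf e s v ->
  exists C, dominating_clique_of e (nbhd e v) C.
Proof.
move=> [vo pe] [v0 [w [_ w_uniq]]].
set L := [set c | e v c & prec s c v].
have cliqueL : is_clique e L.
  by move=> a b; rewrite !inE => /andP[va av] /andP[vb bv]; apply: (pe v); rewrite // esym.
have nbr_L x : e v x -> [\/ x \in L, exists2 y, y \in L & e x y | x = w].
  move=> vx; have [xv|nxv] := boolP (prec s x v); first by apply: Or31; rewrite inE vx.
  have vx_prec : prec s v x.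
    rewrite /prec ltn_neqAle leqNgt nxv andbT.
    by apply: contraTneq vx => /(vertex_ordering_index_inj vo) ->; rewrite eirr.
  have [/existsP[y /andP[xy yv]]|none] := boolP [exists y, e x y && prec s y v].
    apply: Or32; exists y => //; rewrite inE yv andbT esym.
    apply: (pe x) => //; first by rewrite esym.
      exact: ltn_trans yv vx_prec.
    by apply: contraTneq yv => ->; rewrite /prec ltnn.
  apply: Or33; apply: w_uniq; right; split.
    by apply: contraTneq vx_prec => x0; rewrite /prec x0 ltn0.
  split; first by rewrite esym.
  by move=> y xy; rewrite leqNgt; apply: contra none => yv; apply/existsP; exists y; rewrite xy.
case: (set_0Vmem L) => [L0 | [c cL]].
  have onlyw x : e v x -> x = w by case/nbr_L => [|[y]|//]; rewrite L0 inE.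
  exists (nbhd e v); split => //; split => [a b|x]; last by left.
  by rewrite !inE => /onlyw-> /onlyw->; rewrite eqxx.
have wL : w \in L.
  move: cL; rewrite inE => /andP[vc cv].
  have [m lm] := leftmost_nbr_exists s vc.
  have <- : m = w by apply: w_uniq; left.
  by case: lm => vm min; rewrite inE vm; apply: leq_ltn_trans (min c vc) cv.
exists L; split; first by apply/subsetP => x; rewrite !inE => /andP[].
split => // x; rewrite inE => /nbr_L[||->]; by [left | right | left].
Qed.

Lemma dominating_clique_prefix_PEO v (C : {set T}) : chordal e ->
  C \subset nbhd e v -> is_clique e C -> exists t, PEO e (enum C ++ v :: t).
Proof.
move=> ech sCN cliqueC.
have Cv c : c \in C -> e v c by move/(subsetP sCN); rewrite inE.
have vC : v \notin C by apply/negP => /Cv; rewrite eirr.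
have uk : uniq (rcons (enum C) v) by rewrite rcons_uniq mem_enum vC enum_uniq.
have clk : is_clique e [set x in rcons (enum C) v].
  move=> a b; rewrite !inE !mem_rcons !inE !mem_enum => /orP[/eqP->|aC] /orP[/eqP->|bC] ab.
  - by rewrite eqxx in ab.
  - exact: Cv.
  - by rewrite esym Cv.
  - exact: cliqueC.
by have [t] := clique_prefix_PEO esym eirr ech uk clk; rewrite cat_rcons; exists t.
Qed.

Lemma dominating_clique_prefix_Fbranch_leaf v (C : {set T}) t :
  (exists x, e v x) -> dominating_clique_of e (nbhd e v) C ->
  vertex_ordering (enum C ++ v :: t) -> Fbranch_leaf e (enum C ++ v :: t) v.
Proof.
set s := enum C ++ v :: t => -[x1 vx1] [sCN [cliqueC domC]] vo.
have vC : v \notin C by apply/negP => /(subsetP sCN); rewrite inE eirr.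
have Cprec c : c \in C -> prec s c v.
  move=> cC; rewrite /prec !index_cat !mem_enum cC (negbTE vC) index_head addn0.
  by rewrite index_mem mem_enum.
have [c1 C_def] : exists c1, enum C = c1 :: behead (enum C).
  case E: (enum C) => [|c1 r]; last by exists c1.
  have /domC[x1C|[c cC _]] : x1 \in nbhd e v by rewrite inE.
  - by move: (mem_enum C x1); rewrite E x1C.
  - by move: (mem_enum C c); rewrite E cC.
have c1C : c1 \in C by rewrite -mem_enum C_def mem_head.
have [m lm] := leftmost_nbr_exists s vx1.
have v0 : index v s != 0 by apply: contraTneq (Cprec c1 c1C) => v0; rewrite /prec v0.
split => //; exists m; split; first by left.
move=> w' [[_ lw'] | [w'0 [w'v min]]]; first exact: leftmost_nbr_inj vo lw' lm.
have [c cC w'c] : exists2 c, c \in C & e w' c.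
  case: (domC w') => [||//]; first by rewrite inE esym.
  move=> w'C; exists c1 => //; apply: cliqueC => //.
  by apply: contra_neq w'0 => ->; rewrite /s C_def index_head.
by have := Cprec c cC; rewrite /prec ltnNge (min c w'c).
Qed.

End FTrees.

Lemma connected_nbr_exists (T : finType) (e : rel T) v :
  connected_graph e -> 2 <= #|T| -> exists x, e v x.
Proof.
move=> conn /card_gt1P[a [b [_ _ ab]]].
have [y yv] : exists y, y != v.
  by case: (eqVneq a v) => [av|av]; [exists b; rewrite -av eq_sym | exists a].
case/connectP: (conn v y) => [[|x p]] /=; first by move=> _ yv'; rewrite yv' eqxx in yv.
by case/andP=> vx _ _; exists x.
Qed.

Theorem theorem10 (T : finType) (e : rel T) :
  simple_graph e -> connected_graph e -> chordal e -> 2 <= #|T| ->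
  forall v : T,
    (exists s : seq T, PEO e s /\ Fbranch_leaf e s v) <->
    (exists C : {set T}, dominating_clique_of e (nbhd e v) C).
Proof.
move=> [esym eirr] conn ech card2 v; split.
- by move=> [s [peo leaf]]; apply: Fbranch_leaf_nbhd_dominating_clique leaf.
- move=> [C domC]; have [sCN [cliqueC _]] := domC.
  have [t peo] := dominating_clique_prefix_PEO esym eirr ech sCN cliqueC.
  have nbr := connected_nbr_exists v conn card2.
  exists (enum C ++ v :: t); split => //.
  exact: (dominating_clique_prefix_Fbranch_leaf esym eirr nbr domC peo.1).
Qed.
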